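(* Let $\Delta\in\{0,1,-1\}^{m\times m}$, regarded as a matrix over $\mathbb Q$, be a connection matrix with column/row partition $J_0,\dots,J_b$ which is totally unimodular. Let $\Delta^m$ be the last matrix produced by the Incremental Sweeping Algorithm applied to $\Delta$. Then for every position $(i,j)$ marked as a primary pivot, $\Delta^m_{ij}\in\{1,-1\}$.
   Context: A matrix is totally unimodular (TU) if every square submatrix has determinant in $\{0,1,-1\}$. $U^{pq}$ is the $m\times m$ matrix whose only nonzero entry is a $1$ in position $(p,q)$. Superscripts on matrices are indices, not powers. A connection matrix (over a field $\mathbb F$, here $\mathbb Q$) is a matrix $\Delta\in\mathbb F^{m\times m}$ together with a partition $\{1,\dots,m\}=J_0\sqcup\cdots\sqcup J_b$ (the column/row partition; the $J_k$ need not consist of consecutive integers) such that $\Delta$ is upper triangular, $\Delta\Delta=0$, and $\Delta_{ij}=0$ unless $i<j$ and $(i,j)\in\bigcup_{k=1}^bJ_{k-1}\times J_k$. For $1\le r\le m-1$ the $r$-th diagonal is $\{(j-r,j):r<j\le m\}$. Incremental Sweeping Algorithm (ISA) applied to a connection matrix $\Delta$: set $\Delta^0=\Delta^1=\Delta$. For $r=1,\dots,m-1$ in turn: (Markup) for every position $(j-r,j)$ on the $r$-th diagonal with $\Delta^r_{j-r,j}\ne0$ such that no position in column $j$ was marked as a primary pivot at an earlier iteration: if some position $(j-r,p)$ of row $j-r$ was marked as a primary pivot at an earlier iteration, mark $(j-r,j)$ as a change-of-basis pivot of iteration $r$; otherwise mark $(j-r,j)$ permanently as a primary pivot. (Update)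 Let $T^r=I-\sum \frac{\Delta^r_{j-r,j}}{\Delta^r_{j-r,p}}U^{pj}$, the sum running over all change-of-basis pivots $(j-r,j)$ of iteration $r$, where $(j-r,p)$ is the primary pivot position in row $j-r$; set $\Delta^{r+1}=(T^r)^{-1}\Delta^rT^r$. *)

From HB Require Import structures.
From mathcomp Require Import all_boot all_order all_algebra.
Set Implicit Arguments. Unset Strict Implicit. Unset Printing Implicit Defensive.
Import Order.TTheory GRing.Theory Num.Theory.
Local Open Scope ring_scope.

(* Indices are 0-based: 'I_m = {0,...,m-1}. *)

Definition totally_unimodular (m : nat) (A : 'M[rat]_m) : Prop :=
  forall (k : nat) (f g : 'I_k -> 'I_m),
    (forall a b : 'I_k, (a < b)%N -> (f a < f b)%N) ->
    (forall a b : 'I_k, (a < b)%N -> (g a < g b)%N) ->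
    \det (\matrix_(a, b) A (f a) (g b)) \in [:: 0; 1; -1].

(* Connection matrix with partition J_0,...,J_b given by the block map
   d : 'I_m -> 'I_(b+1), i.e. i \in J_(d i). *)
Definition connection_matrix (m b : nat) (d : 'I_m -> 'I_b.+1)
  (D : 'M[rat]_m) : Prop :=
  [/\ (forall i j : 'I_m, (j < i)%N -> D i j = 0),
      D *m D = 0 &
      (forall i j : 'I_m, D i j != 0 ->
         (i < j)%N /\ nat_of_ord (d j) = (nat_of_ord (d i)).+1)].

(* State of the ISA before iteration r: the matrix Delta^r and the set of
   positions marked (so far) as primary pivots. *)
Definition isa_stateT (m : nat) := ('M[rat]_m * {set 'I_m * 'I_m})%type.

Section ISA.
Variable m : nat.
Implicit Types (D : 'M[rat]_m) (P : {set 'I_m * 'I_m}) (r : nat).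

Definition col_has_pivot P (j : 'I_m) : bool := [exists i, (i, j) \in P].
Definition row_has_pivot P (i : 'I_m) : bool := [exists p, (i, p) \in P].

Definition markable D P r (ij : 'I_m * 'I_m) : bool :=
  [&& (ij.1 + r)%N == ij.2, D ij.1 ij.2 != 0 & ~~ col_has_pivot P ij.2].

Definition new_primary D P r : {set 'I_m * 'I_m} :=
  [set ij | markable D P r ij && ~~ row_has_pivot P ij.1].

Definition change_of_basis D P r (ij : 'I_m * 'I_m) : bool :=
  markable D P r ij && row_has_pivot P ij.1.

(* the summand (Delta_{j-r,j} / Delta_{j-r,p}) U^{pj}, p the primary pivot
   column of row j-r *)
Definition cob_term D P (ij : 'I_m * 'I_m) : 'M[rat]_m :=
  match [pick p | (ij.1, p) \in P] with
  | Some p => (D ij.1 ij.2 / D ij.1 p) *: delta_mx p ij.2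
  | None => 0
  end.

Definition isa_T D P r : 'M[rat]_m :=
  1%:M - \sum_(ij : 'I_m * 'I_m | change_of_basis D P r ij) cob_term D P ij.

Definition isa_step r (s : isa_stateT m) : isa_stateT m :=
  let D := s.1 in let P := s.2 in
  (invmx (isa_T D P r) *m D *m isa_T D P r, P :|: new_primary D P r).

(* isa_state D0 n = state before iteration n+1, i.e. (Delta^{n+1}, pivots
   marked in iterations 1..n). *)
Fixpoint isa_state (D0 : 'M[rat]_m) (n : nat) : isa_stateT m :=
  match n with
  | 0 => (D0, set0)
  | n'.+1 => isa_step n (isa_state D0 n')
  end.

Definition isa_final (D0 : 'M[rat]_m) : 'M[rat]_m := (isa_state D0 m.-1).1.
Definition isa_primary (D0 : 'M[rat]_m) : {set 'I_m * 'I_m} :=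
  (isa_state D0 m.-1).2.

End ISA.

From HB Require Import structures.
From mathcomp Require Import all_boot all_order all_algebra.
From mathcomp Require Import fingroup perm.
Import Order.TTheory GRing.Theory Num.Theory.
Local Open Scope ring_scope.
Set Implicit Arguments. Unset Strict Implicit.

(* Every ISA update conjugates by an upper unitriangular matrix 1 + N with
   N^2 = 0, so Delta = S Delta^r S' with S, S' upper unitriangular; it also
   keeps each pivot column zero strictly below its pivot and clears the swept
   diagonals of the columns without pivot.  Hence in Delta^m every non-pivot
   column is zero.  Take the pivots (a, c) whose intervals [a, c] lie in a
   window [lo, hi): in the minor of Delta on their rows and columns, the
   columns of S Delta^m outside the window do not contribute (S' is upper
   triangular), so the minor is a unitriangular minor of S' times a matrix
   that, after reordering rows and columns alike, is triangular with these
   pivots on the diagonal.  By total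
   unimodularity the product of the pivots is 0, 1 or -1.  For a pivot (i, j)
   compare the windows [i, j] and [i+1, j): their products differ by the
   factor Delta^m_ij and both are nonzero. *)

Section Trits.
Variable R : nzRingType.
Implicit Types x y : R.

Definition trit x : bool := x \in [:: 0; 1; -1].

Lemma tritP x : reflect [\/ x = 0, x = 1 | x = -1] (trit x).
Proof. by rewrite /trit !inE; apply: (iffP or3P) => -[] /eqP; constructor. Qed.

Lemma tritM x y : trit x -> trit y -> trit (x * y).
Proof.
move=> /tritP[] -> /tritP[] ->; apply/tritP;
  rewrite ?mul0r ?mulr0 ?mul1r ?mulr1 ?mulN1r ?opprK; by [constructor | right].
Qed.

Lemma trit_sign (b : bool) x : trit x -> trit ((-1) ^+ b * x).
Proof. by apply: tritM; case: b; apply/tritP; constructor. Qed.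

Lemma trit_sqr x : trit x -> x != 0 -> x * x = 1.
Proof. by move=> /tritP[] ->; rewrite ?eqxx // ?mulr1 ?mulrNN ?mulr1. Qed.

Lemma trit_cancelr x y : trit (x * y) -> trit y -> y != 0 -> trit x.
Proof.
by move=> xy_trit y_trit y_neq0; rewrite -[x]mulr1 -(trit_sqr y_trit y_neq0) mulrA tritM.
Qed.

Lemma trit_neq0 x : trit x -> x != 0 -> x = 1 \/ x = -1.
Proof. by move=> /tritP[] ->; rewrite ?eqxx //; [left | right]. Qed.

End Trits.

Lemma sorting_perm k n (h : 'I_k -> 'I_n) : injective h ->
  exists s : 'S_k, {homo (h \o s) : a b / (a < b)%N}.
Proof.
move=> h_inj.
pose rk x := #|[set y | (h y < h x)%N]|.
have rk_mono x y : (h x < h y)%N -> (rk x < rk y)%N.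
  move=> hxy; apply: proper_card; apply/properP; split.
    by apply/subsetP => z; rewrite !inE => /ltn_trans; apply.
  by exists x; rewrite !inE // ltnn.
have rk_lt x : (rk x < k)%N.
  rewrite -[k in (_ < k)%N]card_ord; apply: proper_card.
  by apply/properP; split; [exact: subset_predT | exists x; rewrite ?inE // ltnn].
pose r x := Ordinal (rk_lt x).
have r_inj : injective r.
  move=> x y /(congr1 val) /= rk_xy.
  case: (ltngtP (h x) (h y)) => [/rk_mono|/rk_mono|/val_inj/h_inj //];
    by rewrite rk_xy ltnn.
exists (perm r_inj)^-1%g => a b lt_ab /=.
set x := (perm r_inj)^-1%g a; set y := (perm r_inj)^-1%g b.
have [rx ry] : rk x = a /\ rk y = b.
  by split; rewrite -[rk _]/(val (r _)) -permE permKV.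
case: (ltngtP (h x) (h y)) => // [/rk_mono|/val_inj/h_inj exy].
  by rewrite rx ry => /(ltn_trans lt_ab); rewrite ltnn.
by move: lt_ab; rewrite -rx -ry exy ltnn.
Qed.

Lemma increasing_enum n (A : {set 'I_n}) :
  exists g : 'I_#|A| -> 'I_n, {homo g : a b / (a < b)%N} /\ g @: setT = A.
Proof.
pose e (a : 'I_#|A|) : 'I_n := enum_val a.
have e_inj : injective e by move=> a b; apply: enum_val_inj.
have [s s_incr] := sorting_perm e_inj.
exists (e \o s); split=> //.
have g_inj : injective (e \o s) by move=> a b /e_inj /perm_inj.
apply/eqP; rewrite eqEcard card_imset // cardsT card_ord leqnn andbT.
by apply/subsetP => _ /imsetP[a _ ->]; apply: enum_valP.
Qed.

Lemma increasing_inj k n (g : 'I_k -> 'I_n) : {homo g : a b / (a < b)%N} -> injective g.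
Proof.
move=> g_incr a b gab; apply: val_inj.
by case: (ltngtP a b) => // /g_incr; rewrite gab ltnn.
Qed.

Section Triangular.
Variable R : comNzRingType.

Definition unitriangular n (A : 'M[R]_n) : Prop :=
  (forall a b : 'I_n, (b < a)%N -> A a b = 0) /\ forall a, A a a = 1.

Definition unitriangular_equiv n (A B : 'M[R]_n) : Prop :=
  exists S T, [/\ unitriangular S, unitriangular T & A = S *m B *m T].

Lemma det_upper_trig n (A : 'M[R]_n) :
  (forall a b : 'I_n, (b < a)%N -> A a b = 0) -> \det A = \prod_i A i i.
Proof.
move=> A_upper; rewrite -det_tr det_trig; first by apply: eq_bigr => i _; rewrite mxE.
by apply/is_trig_mxP => i j lt_ij; rewrite mxE A_upper.
Qed.

Lemma det_unitriangular n (A : 'M[R]_n) : unitriangular A -> \det A = 1.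
Proof. by case=> A_upper A_diag; rewrite det_upper_trig // big1. Qed.

Lemma unitriangularM n (A B : 'M[R]_n) :
  unitriangular A -> unitriangular B -> unitriangular (A *m B).
Proof.
case=> A_upper A_diag [B_upper B_diag]; split=> [a b lt_ba|a].
  rewrite mxE big1 // => c _.
  case: (ltnP c a) => [/A_upper->|le_ac]; first by rewrite mul0r.
  by rewrite B_upper ?mulr0 // (leq_trans lt_ba).
rewrite mxE (bigD1 a) //= A_diag B_diag mulr1 big1 ?addr0 // => c /negPf c_neq.
case: (ltngtP c a) => [/A_upper->|/B_upper->|/val_inj/eqP]; by rewrite ?mul0r ?mulr0 ?c_neq.
Qed.

Lemma unitriangular1 n : unitriangular (1%:M : 'M[R]_n).
Proof. by split=> [a b lt_ba|a]; rewrite mxE ?eqxx // -val_eqE (gtn_eqF lt_ba). Qed.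

Lemma unitriangular1D n (N : 'M[R]_n) :
  (forall a b : 'I_n, (b <= a)%N -> N a b = 0) -> unitriangular (1%:M + N).
Proof.
move=> N_upper; split=> [a b lt_ba|a]; rewrite !mxE N_upper ?addr0 ?(ltnW lt_ba) //.
  by rewrite -val_eqE (gtn_eqF lt_ba).
by rewrite eqxx.
Qed.

Lemma unitriangular_equiv_trans n (A B C : 'M[R]_n) :
  unitriangular_equiv A B -> unitriangular_equiv B C -> unitriangular_equiv A C.
Proof.
move=> [S [T [S_ut T_ut ->]]] [S' [T' [S'_ut T'_ut ->]]].
exists (S *m S'), (T' *m T); split; try exact: unitriangularM.
by rewrite !mulmxA.
Qed.

Lemma det_row_col_perm k (s : 'S_k) (A : 'M[R]_k) :
  \det (row_perm s (col_perm s A)) = \det A.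
Proof.
rewrite row_permE col_permE !det_mulmx !det_perm odd_permV mulrCA.
by rewrite -expr2 sqrr_sign mulr1.
Qed.

Lemma det_trig_wrt k n (A : 'M[R]_k) (h : 'I_k -> 'I_n) : injective h ->
  (forall u v, (h v < h u)%N -> A u v = 0) -> \det A = \prod_u A u u.
Proof.
move=> h_inj A_trig; have [s s_incr] := sorting_perm h_inj.
rewrite -(det_row_col_perm s) det_upper_trig => [|a b lt_ba]; last first.
  by rewrite !mxE A_trig //; apply: s_incr.
by rewrite [RHS](reindex_inj (@perm_inj _ s)); apply: eq_bigr => u _; rewrite !mxE.
Qed.

End Triangular.

Lemma totally_unimodular_minor m (A : 'M[rat]_m) k (f g : 'I_k -> 'I_m) :
  totally_unimodular A -> injective f -> {homo g : a b / (a < b)%N} ->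
  trit (\det (\matrix_(a, b) A (f a) (g b))).
Proof.
move=> A_tu f_inj g_incr; have [s s_incr] := sorting_perm f_inj.
have := A_tu k (f \o s) g s_incr g_incr.
have -> : \matrix_(a, b) A ((f \o s) a) (g b) = row_perm s (\matrix_(a, b) A (f a) (g b)).
  by apply/matrixP => a b; rewrite !mxE.
rewrite row_permE det_mulmx det_perm => /(trit_sign (odd_perm s)).
by rewrite mulrA -expr2 sqrr_sign mul1r.
Qed.

Section PivotForm.
Variable m : nat.
Implicit Types (M : 'M[rat]_m) (P : {set 'I_m * 'I_m}).

Record pivot_form r M P : Prop := PivotForm {
  pivot_band : forall a c, (a, c) \in P -> (a < c)%N /\ (c < a + r)%N;
  pivot_row_uniq : forall a c c', (a, c) \in P -> (a, c') \in P -> c = c';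
  pivot_col_uniq : forall a a' c, (a, c) \in P -> (a', c) \in P -> a = a';
  pivot_neq0 : forall a c, (a, c) \in P -> M a c != 0;
  below_pivot0 : forall a c b : 'I_m, (a, c) \in P -> (a < b)%N -> M b c = 0;
  free_col0 : forall c b : 'I_m, ~~ col_has_pivot P c -> (c < b + r)%N -> M b c = 0
}.

Lemma connection_pivot_form b (d : 'I_m -> 'I_b.+1) M :
  connection_matrix d M -> pivot_form 1 M set0.
Proof.
case=> M_upper _ M_supp; split=> [a c|a c c'|a a' c|a c|a c b'|c b' _]; rewrite ?inE //.
rewrite addn1 ltnS leq_eqVlt => /orP[/eqP/val_inj eq_cb|]; last exact: M_upper.
by subst c; apply/eqP; apply: contraT => /M_supp[]; rewrite ltnn.
Qed.

End PivotForm.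

Section Step.
Variables (m r : nat) (M : 'M[rat]_m) (P : {set 'I_m * 'I_m}).
Hypothesis pf : pivot_form r M P.

Local Notation cob := (change_of_basis M P r).

Definition cobN : 'M[rat]_m := \sum_(ij | cob ij) cob_term M P ij.

Lemma cob_diag i c : cob (i, c) -> (i + r)%N = c.
Proof. by case/andP => /and3P[/eqP]. Qed.

Lemma cob_free_col i c : cob (i, c) -> ~~ col_has_pivot P c.
Proof. by case/andP => /and3P[]. Qed.

Lemma cob_pivot_row i c : cob (i, c) -> exists p, (i, p) \in P.
Proof. by case/andP => _ /existsP. Qed.

Lemma cob_col_uniq i i' c : cob (i, c) -> cob (i', c) -> i = i'.
Proof.
by move=> /cob_diag ic /cob_diag i'c; apply/val_inj/eqP; rewrite -(eqn_add2r r) ic i'c.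
Qed.

Lemma cob_row_uniq i c c' : cob (i, c) -> cob (i, c') -> c = c'.
Proof. by move=> /cob_diag ic /cob_diag ic'; apply: val_inj; rewrite /= -ic -ic'. Qed.

Variant cobN_col_spec (c : 'I_m) : Prop :=
  | CobNColNone of (forall i, ~~ cob (i, c)) & (forall b, cobN b c = 0)
  | CobNColPivot i p of cob (i, c) & (i, p) \in P &
      (forall b, cobN b c = (b == p)%:R * (M i c / M i p)).

Lemma cobN_colP c : cobN_col_spec c.
Proof.
have cob_termE i' c' b : cob_term M P (i', c') b c =
    if [pick p | (i', p) \in P] is Some p
    then (c' == c)%:R * ((b == p)%:R * (M i' c' / M i' p)) else 0.
  rewrite /cob_term; case: pickP => [p _|_]; rewrite !mxE //=.
  rewrite [c == _]eq_sym.
  by case: (b == p); case: (c' == c); rewrite ?mulr0 ?mul0r ?mulr1 ?mul1r.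
case: (boolP [exists i, cob (i, c)]) => [/existsP[i cob_ic] | no_cob].
  have [p ip_P] := cob_pivot_row cob_ic.
  apply: (CobNColPivot cob_ic ip_P) => b.
  rewrite /cobN summxE (bigD1 (i, c)) //= big1 => [|[i' c'] /andP[cob_ic' ne]].
    rewrite cob_termE ?addr0.
    case: pickP => [p' /(pivot_row_uniq pf ip_P) -> | /(_ p)]; last by rewrite ip_P.
    by rewrite eqxx mulr1n mul1r.
  rewrite cob_termE; case: pickP => // p' _; case: eqVneq => [eq_c|]; last by rewrite mul0r.
  by subst c'; move: ne; rewrite (cob_col_uniq cob_ic' cob_ic) eqxx.
apply: CobNColNone => [i|b].
  by apply: contra no_cob => cob_ic; apply/existsP; exists i.
rewrite /cobN summxE big1 // => -[i' c'] cob_ic'; rewrite cob_termE.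
case: pickP => // p' _; case: eqVneq => [eq_c|]; last by rewrite mul0r.
by subst c'; case/negP: no_cob; apply/existsP; exists i'.
Qed.

Lemma mulmx_cobN0 (X : 'M[rat]_m) a c : (forall i, ~~ cob (i, c)) -> (X *m cobN) a c = 0.
Proof.
move=> no_cob; rewrite mxE big1 // => b _.
case: (cobN_colP c) => [_ -> | i p cob_ic]; first by rewrite mulr0.
by have := no_cob i; rewrite cob_ic.
Qed.

Lemma mulmx_cobN (X : 'M[rat]_m) a c i p : cob (i, c) -> (i, p) \in P ->
  (X *m cobN) a c = X a p * (M i c / M i p).
Proof.
move=> cob_ic ip_P; rewrite mxE.
case: (cobN_colP c) => [no_cob _ | i' p' cob_i'c i'p'_P cobNE].
  by have := no_cob i; rewrite cob_ic.
rewrite (cob_col_uniq cob_i'c cob_ic) in i'p'_P cobNE *.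
rewrite (pivot_row_uniq pf i'p'_P ip_P) in cobNE.
rewrite (bigD1 p) //= cobNE eqxx mul1r big1 ?addr0 // => b /negPf b_neq_p.
by rewrite cobNE b_neq_p mul0r mulr0.
Qed.

Lemma cobN_mulmx0 (X : 'M[rat]_m) a c :
  (forall i c', cob (i, c') -> (i, a) \notin P) -> (cobN *m X) a c = 0.
Proof.
move=> no_cob; rewrite mxE big1 // => b _.
case: (cobN_colP b) => [_ -> | i p cob_ib ip_P ->]; first by rewrite mul0r.
case: eqVneq => [eq_ap|]; last by rewrite !mul0r.
by subst p; have := no_cob i b cob_ib; rewrite ip_P.
Qed.

Lemma cobN_mulmx (X : 'M[rat]_m) a c i c' : cob (i, c') -> (i, a) \in P ->
  (cobN *m X) a c = (M i c' / M i a) * X c' c.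
Proof.
move=> cob_ic' ia_P; rewrite mxE (bigD1 c') //= big1 ?addr0 => [|b b_neq].
  case: (cobN_colP c') => [no_cob _ | i' p cob_i'c' i'p_P ->].
    by have := no_cob i; rewrite cob_ic'.
  rewrite (cob_col_uniq cob_i'c' cob_ic') in i'p_P *.
  by rewrite (pivot_row_uniq pf i'p_P ia_P) eqxx mul1r.
case: (cobN_colP b) => [_ -> | i' p cob_i'b i'p_P ->]; first by rewrite mul0r.
case: eqVneq => [eq_ap|]; last by rewrite !mul0r.
subst p; rewrite (pivot_col_uniq pf i'p_P ia_P) in cob_i'b.
by move: b_neq; rewrite (cob_row_uniq cob_i'b cob_ic') eqxx.
Qed.

Lemma cobN_sqr0 : cobN *m cobN = 0.
Proof.
apply/matrixP => a c; rewrite [RHS]mxE.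
case: (cobN_colP c) => [no_cob _ | i p cob_ic ip_P _]; first by rewrite mulmx_cobN0.
rewrite (mulmx_cobN _ _ cob_ic ip_P).
case: (cobN_colP p) => [_ -> | i' p' cob_i'p _ _]; first by rewrite mul0r.
by case/negP: (cob_free_col cob_i'p); apply/existsP; exists i.
Qed.

Lemma cobN_strict_upper (a c : 'I_m) : (c <= a)%N -> cobN a c = 0.
Proof.
move=> le_ca; case: (cobN_colP c) => [_ -> // | i p cob_ic ip_P ->].
case: eqVneq => [eq_ap|]; last by rewrite !mul0r.
subst p; have [_ lt_a] := pivot_band pf ip_P.
by move: (leq_ltn_trans le_ca lt_a); rewrite (cob_diag cob_ic) ltnn.
Qed.

Lemma isa_TE : isa_T M P r = 1%:M - cobN.
Proof. by []. Qed.

Lemma mulmx_1BcobN_1DcobN : (1%:M - cobN) *m (1%:M + cobN) = 1%:M.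
Proof. by rewrite mulmxBl mul1mx mulmxDr mulmx1 cobN_sqr0 addr0 addrK. Qed.

Lemma invmx_isa_T : invmx (isa_T M P r) = 1%:M + cobN.
Proof.
have [T_unit _] := mulmx1_unit mulmx_1BcobN_1DcobN.
by rewrite isa_TE -[RHS](mulKmx T_unit) mulmx_1BcobN_1DcobN mulmx1.
Qed.

Definition step_pivots : {set 'I_m * 'I_m} := P :|: new_primary M P r.
Definition step_matrix : 'M[rat]_m := (1%:M + cobN) *m M *m (1%:M - cobN).

Lemma isa_stepE : isa_step r (M, P) = (step_matrix, step_pivots).
Proof. by rewrite /isa_step /= invmx_isa_T. Qed.

Lemma step_unitriangular_equiv : unitriangular_equiv M step_matrix.
Proof.
exists (1%:M - cobN), (1%:M + cobN); split.
- by apply: unitriangular1D => a b le_ba; rewrite mxE cobN_strict_upper ?oppr0.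
- exact: unitriangular1D cobN_strict_upper.
rewrite /step_matrix !mulmxA mulmx_1BcobN_1DcobN mul1mx.
by rewrite -mulmxA mulmx_1BcobN_1DcobN mulmx1.
Qed.

Local Notation Q := (M *m (1%:M - cobN)).

Lemma step_matrixE a c : step_matrix a c = Q a c + (cobN *m Q) a c.
Proof. by rewrite /step_matrix -mulmxA mulmxDl mul1mx mxE. Qed.

Lemma step_QE b c : Q b c = M b c - (M *m cobN) b c.
Proof. by rewrite mulmxBr mulmx1 mxE [X in _ + X]mxE. Qed.

Lemma new_pivot_no_cob (a c : 'I_m) : (a, c) \in step_pivots -> forall i, ~~ cob (i, c).
Proof.
move=> ac_P' i; apply/negP => cob_ic; case/setUP: ac_P' => [ac_P|].
  by case/negP: (cob_free_col cob_ic); apply/existsP; exists a.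
rewrite inE /= => /andP[/and3P[/eqP ac _ _] no_row].
have eq_ia : i = a by apply/val_inj/eqP; rewrite -(eqn_add2r r) ac (cob_diag cob_ic).
by subst i; case/negP: no_row; case/andP: cob_ic.
Qed.

Lemma below_step_pivot0 (a c b : 'I_m) : (a, c) \in step_pivots -> (a < b)%N -> M b c = 0.
Proof.
case/setUP => [ac_P lt_ab|]; first exact: (below_pivot0 pf ac_P lt_ab).
rewrite inE /= => /andP[/and3P[/eqP ac _ free_c] _] lt_ab.
by apply: (free_col0 pf free_c); rewrite -ac ltn_add2r.
Qed.

Lemma cobN_Q_row b c :
  (forall c', (exists2 i, cob (i, c') & (i, b) \in P) -> Q c' c = 0) ->
  (cobN *m Q) b c = 0.
Proof.
move=> Q_c'_0; case: (boolP [exists i, [exists c', cob (i, c') && ((i, b) \in P)]]).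
  case/existsP => i /existsP[c' /andP[cob_ic' ib_P]].
  by rewrite (cobN_mulmx _ _ cob_ic' ib_P) Q_c'_0 ?mulr0 //; exists i.
move=> no_cob; apply: cobN_mulmx0 => i c' cob_ic'; apply: contra no_cob => ib_P.
by apply/existsP; exists i; apply/existsP; exists c'; rewrite cob_ic' ib_P.
Qed.

Lemma step_pivot_col (a c x : 'I_m) : (a, c) \in step_pivots -> (a <= x)%N ->
  step_matrix x c = M x c.
Proof.
move=> ac_P' le_ax; have no_cob := new_pivot_no_cob ac_P'.
rewrite step_matrixE step_QE mulmx_cobN0 // subr0 cobN_Q_row ?addr0 //.
move=> c' [i cob_ic' ix_P].
rewrite step_QE mulmx_cobN0 // subr0 (below_step_pivot0 ac_P') //.
have [_ lt_x] := pivot_band pf ix_P; rewrite -(cob_diag cob_ic').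
exact: leq_ltn_trans le_ax lt_x.
Qed.

Lemma step_Q_free_col0 (c b : 'I_m) : ~~ col_has_pivot step_pivots c ->
  (c < b + r.+1)%N -> Q b c = 0.
Proof.
move=> free_c' lt_cb.
have free_c : ~~ col_has_pivot P c.
  by apply: contra free_c' => /existsP[a ac_P]; apply/existsP; exists a; rewrite inE ac_P.
have not_new a : (a, c) \notin new_primary M P r.
  by apply: contra free_c' => ac_new; apply/existsP; exists a; rewrite inE ac_new orbT.
rewrite step_QE; case: (cobN_colP c) => [no_cob _ | i p cob_ic ip_P _].
  rewrite mulmx_cobN0 // subr0; case: (ltnP c (b + r)) => [/(free_col0 pf free_c)//|le_bc].
  have bc : (b + r)%N = c by apply/eqP; rewrite eqn_leq le_bc -ltnS -addnS lt_cb.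
  (* A nonzero entry of a free column on the r-th diagonal would be marked. *)
  apply/eqP; apply: contraT => Mbc_neq0.
  have bc_mark : markable M P r (b, c) by rewrite /markable /= bc eqxx Mbc_neq0 free_c.
  case: (boolP (row_has_pivot P b)) => b_row.
    by have := no_cob b; rewrite /change_of_basis bc_mark b_row.
  by have := not_new b; rewrite inE bc_mark b_row.
rewrite (mulmx_cobN _ _ cob_ic ip_P); case: (eqVneq b i) => [->|b_neq_i].
  by rewrite mulrCA divff ?mulr1 ?subrr // (pivot_neq0 pf ip_P).
have lt_ib : (i < b)%N.
  have le_ib : (i <= b)%N by rewrite -(leq_add2r r) (cob_diag cob_ic) -ltnS -addnS.
  by rewrite ltn_neqAle le_ib andbT eq_sym.
rewrite (below_pivot0 pf ip_P lt_ib) mul0r subr0.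
by apply: (free_col0 pf (cob_free_col cob_ic)); rewrite -(cob_diag cob_ic) ltn_add2r.
Qed.

Lemma step_free_col0 (c b : 'I_m) : ~~ col_has_pivot step_pivots c ->
  (c < b + r.+1)%N -> step_matrix b c = 0.
Proof.
move=> free_c lt_cb; rewrite step_matrixE step_Q_free_col0 // add0r.
apply: cobN_Q_row => c' [i cob_ic' ib_P]; apply: step_Q_free_col0 => //.
have [_ lt_b] := pivot_band pf ib_P.
by apply: (leq_trans lt_cb); rewrite leq_add2r -(cob_diag cob_ic') ltnW.
Qed.

Lemma step_pivot_form : (0 < r)%N -> pivot_form r.+1 step_matrix step_pivots.
Proof.
move=> r_gt0.
have new_band a c : (a, c) \in new_primary M P r -> (a + r)%N = c.
  by rewrite inE /= => /andP[/and3P[/eqP]].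
have new_free a c : (a, c) \in new_primary M P r -> ~~ col_has_pivot P c.
  by rewrite inE /= => /andP[/and3P[]].
have new_no_row a c : (a, c) \in new_primary M P r -> ~~ row_has_pivot P a.
  by rewrite inE /= => /andP[].
split.
- move=> a c /setUP[/(pivot_band pf)[lt_ac lt_c]|/new_band <-].
    by split; rewrite // addnS ltnW.
  by split; rewrite ?addnS // -{1}[a : nat]addn0 ltn_add2l.
- move=> a c c' /setUP[ac_P|ac_new] /setUP[ac'_P|ac'_new].
  + exact: (pivot_row_uniq pf ac_P ac'_P).
  + by case/existsP: (new_no_row _ _ ac'_new); exists c.
  + by case/existsP: (new_no_row _ _ ac_new); exists c'.
  + by apply: val_inj; rewrite /= -(new_band _ _ ac_new) -(new_band _ _ ac'_new).
- move=> a a' c /setUP[ac_P|ac_new] /setUP[a'c_P|a'c_new].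
  + exact: (pivot_col_uniq pf ac_P a'c_P).
  + by case/existsP: (new_free _ _ a'c_new); exists a.
  + by case/existsP: (new_free _ _ ac_new); exists a'.
  + apply/val_inj/eqP; rewrite -(eqn_add2r r).
    by rewrite (new_band _ _ ac_new) (new_band _ _ a'c_new).
- move=> a c ac_P'; rewrite (step_pivot_col ac_P') //.
  case/setUP: ac_P' => [/(pivot_neq0 pf)//|]; by rewrite inE /= => /andP[/and3P[]].
- move=> a c b ac_P' lt_ab.
  by rewrite (step_pivot_col ac_P' (ltnW lt_ab)) (below_step_pivot0 ac_P').
- exact: step_free_col0.
Qed.

End Step.

Section States.
Variables (m b : nat) (d : 'I_m -> 'I_b.+1) (D : 'M[rat]_m).
Hypothesis D_conn : connection_matrix d D.

Lemma isa_state_pivot_form n : pivot_form n.+1 (isa_state D n).1 (isa_state D n).2.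
Proof.
elim: n => [|n IHn]; first exact: connection_pivot_form D_conn.
rewrite [isa_state D n.+1]/=; case: (isa_state D n) IHn => M P pf.
by rewrite isa_stepE //; apply: step_pivot_form.
Qed.

Lemma isa_state_equiv n : unitriangular_equiv D (isa_state D n).1.
Proof.
elim: n => [|n IHn].
  by exists 1%:M, 1%:M; split; rewrite ?mul1mx ?mulmx1 //; apply: unitriangular1.
have := isa_state_pivot_form n; rewrite [isa_state D n.+1]/=.
case: (isa_state D n) IHn => M P D_M pf.
by rewrite isa_stepE //; apply: unitriangular_equiv_trans D_M (step_unitriangular_equiv _).
Qed.

End States.

Section PivotMinors.
Variables (m : nat) (D S M S' : 'M[rat]_m) (P : {set 'I_m * 'I_m}).
Hypotheses (S_ut : unitriangular S) (S'_ut : unitriangular S').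
Hypothesis DE : D = S *m M *m S'.
Hypothesis pf : pivot_form m M P.

Definition pivot_row (c : 'I_m) : 'I_m :=
  if [pick a | (a, c) \in P] is Some a then a else c.

Lemma pivot_rowE a c : (a, c) \in P -> pivot_row c = a.
Proof.
move=> ac_P; rewrite /pivot_row; case: pickP => [a' a'c_P | /(_ a)]; last by rewrite ac_P.
exact: (pivot_col_uniq pf a'c_P ac_P).
Qed.

Definition pivot_cols (lo hi : nat) : {set 'I_m} :=
  [set c | [exists a, [&& (a, c) \in P, (lo <= a)%N & (c < hi)%N]]].

Lemma pivot_colsP lo hi c :
  reflect (exists a, [/\ (a, c) \in P, (lo <= a)%N & (c < hi)%N]) (c \in pivot_cols lo hi).
Proof.
rewrite inE; apply: (iffP existsP) => -[a].
  by case/and3P => ac_P le_la lt_ch; exists a.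
by case=> ac_P le_la lt_ch; exists a; rewrite ac_P le_la lt_ch.
Qed.

Lemma final_free_col0 (c b : 'I_m) : ~~ col_has_pivot P c -> M b c = 0.
Proof. by move=> free_c; apply: (free_col0 pf free_c); rewrite ltn_addl. Qed.

Lemma SM_pivot a c : (a, c) \in P -> (S *m M) a c = M a c.
Proof.
move=> ac_P; rewrite mxE (bigD1 a) //= (proj2 S_ut) mul1r big1 ?addr0 // => x x_neq_a.
case: (ltngtP x a) => [/(proj1 S_ut)->|lt_ax|/val_inj eq_xa]; first by rewrite mul0r.
  by rewrite (below_pivot0 pf ac_P lt_ax) mulr0.
by rewrite eq_xa eqxx in x_neq_a.
Qed.

Lemma SM_below_pivot a c (x : 'I_m) : (a, c) \in P -> (a < x)%N -> (S *m M) x c = 0.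
Proof.
move=> ac_P lt_ax; rewrite mxE big1 // => y _.
case: (ltnP y x) => [/(proj1 S_ut)->|le_xy]; first by rewrite mul0r.
by rewrite (below_pivot0 pf ac_P (leq_trans lt_ax le_xy)) mulr0.
Qed.

(* A column outside pivot_cols lo hi but left of hi either has no pivot or
   its pivot lies above row lo, so it vanishes from row lo on. *)
Lemma SM_outside lo hi (x c : 'I_m) : (lo <= x)%N -> c \notin pivot_cols lo hi ->
  (c < hi)%N -> (S *m M) x c = 0.
Proof.
move=> le_lx c_out lt_ch; rewrite mxE big1 // => y _.
case: (ltnP y x) => [/(proj1 S_ut)->|le_xy]; first by rewrite mul0r.
case: (boolP (col_has_pivot P c)) => [/existsP[a ac_P]|free_c]; last first.
  by rewrite final_free_col0 ?mulr0.
case: (ltnP a y) => [lt_ay|le_ya]; first by rewrite (below_pivot0 pf ac_P lt_ay) mulr0.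
case/negP: c_out; apply/pivot_colsP; exists a; split=> //.
exact: leq_trans le_lx (leq_trans le_xy le_ya).
Qed.

Section Enumeration.
Variables (lo hi k : nat) (g : 'I_k -> 'I_m).
Hypothesis g_incr : {homo g : u v / (u < v)%N}.
Hypothesis g_im : g @: setT = pivot_cols lo hi.

Local Notation f u := (pivot_row (g u)).

Lemma enum_col_pivot u :
  exists a, [/\ (a, g u) \in P, (lo <= a)%N, (g u < hi)%N & f u = a].
Proof.
have /pivot_colsP[a [ac_P le_la lt_ch]] : g u \in pivot_cols lo hi.
  by rewrite -g_im imset_f.
by exists a; split=> //; apply: pivot_rowE.
Qed.

Lemma pivot_row_inj : injective (fun u => f u).
Proof.
move=> u v fuv.
have [a [au_P _ _ fu]] := enum_col_pivot u; have [a' [a'v_P _ _ fv]] := enum_col_pivot v.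
rewrite fu fv in fuv; rewrite fuv in au_P.
exact: (increasing_inj g_incr (pivot_row_uniq pf au_P a'v_P)).
Qed.

Lemma pivot_minor_factor :
  \matrix_(u, v) D (f u) (g v) =
  \matrix_(u, v) (S *m M) (f u) (g v) *m \matrix_(u, v) S' (g u) (g v).
Proof.
apply/matrixP => u w; rewrite DE !mxE.
have [a [_ le_la lt_wh _]] := enum_col_pivot w.
rewrite (bigID (mem (pivot_cols lo hi))) /= [X in _ + X]big1 ?addr0 => [|c c_out];
  last first.
  case: (ltnP (g w) c) => [/(proj1 S'_ut)->|le_cw]; first by rewrite mulr0.
  have [a' [_ le_la' _ ->]] := enum_col_pivot u.
  by rewrite (@SM_outside lo hi) ?mul0r // (leq_ltn_trans le_cw lt_wh).
rewrite -[in LHS]g_im big_imset /=; last by move=> x y _ _; apply: increasing_inj.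
by apply: eq_big => [x|x _]; rewrite ?inE // !mxE.
Qed.

Lemma det_pivot_minor :
  \det (\matrix_(u, v) D (f u) (g v)) = \prod_(c in pivot_cols lo hi) M (pivot_row c) c.
Proof.
have S'_minor_ut : unitriangular (\matrix_(u, v) S' (g u) (g v)).
  by split=> [u v /g_incr lt_guv|u]; rewrite mxE ?(proj1 S'_ut _ _ lt_guv) ?(proj2 S'_ut).
rewrite pivot_minor_factor det_mulmx (det_unitriangular S'_minor_ut) mulr1.
rewrite (det_trig_wrt pivot_row_inj) => [|u v lt_fvu]; last first.
  have [a [av_P _ _ fv]] := enum_col_pivot v.
  by rewrite mxE (SM_below_pivot av_P) // -fv.
rewrite -g_im big_imset /=; last by move=> x y _ _; apply: increasing_inj.
apply: eq_big => [x|u _]; rewrite ?inE // mxE.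
by have [a [au_P _ _ ->]] := enum_col_pivot u; rewrite SM_pivot.
Qed.

End Enumeration.

Hypothesis D_tu : totally_unimodular D.

Lemma pivot_prod_trit lo hi : trit (\prod_(c in pivot_cols lo hi) M (pivot_row c) c).
Proof.
have [g [g_incr g_im]] := increasing_enum (pivot_cols lo hi).
rewrite -(det_pivot_minor g_incr g_im).
exact: totally_unimodular_minor D_tu (pivot_row_inj g_incr g_im) g_incr.
Qed.

Lemma pivot_cols_setU1 i j : (i, j) \in P ->
  pivot_cols i j.+1 = j |: pivot_cols i.+1 j.
Proof.
move=> ij_P; apply/setP => c; rewrite in_setU1; apply/pivot_colsP/predU1P.
  case=> a [ac_P le_ia]; rewrite ltnS leq_eqVlt => /orP[/eqP/val_inj|lt_cj]; first by left.
  right; apply/pivot_colsP; exists a; split=> //; rewrite ltn_neqAle le_ia andbT.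
  apply/eqP => /val_inj eq_ia; subst a.
  by move: lt_cj; rewrite (pivot_row_uniq pf ac_P ij_P) ltnn.
case=> [->|/pivot_colsP[a [ac_P lt_ia lt_cj]]]; first by exists i.
by exists a; split; [| exact: ltnW | exact: ltnW].
Qed.

Lemma pivot_pm1 i j : (i, j) \in P -> M i j = 1 \/ M i j = -1.
Proof.
move=> ij_P; have j_out : j \notin pivot_cols i.+1 j.
  by apply/pivot_colsP => -[a [_ _]]; rewrite ltnn.
have := pivot_prod_trit i j.+1.
rewrite pivot_cols_setU1 // big_setU1 //= (pivot_rowE ij_P).
move/trit_cancelr => /(_ (pivot_prod_trit _ _)) Mij_trit.
apply: trit_neq0 (pivot_neq0 pf ij_P); apply: Mij_trit.
apply/prodf_neq0 => c /pivot_colsP[a [ac_P _ _]].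
by rewrite (pivot_rowE ac_P) (pivot_neq0 pf ac_P).
Qed.

End PivotMinors.

Theorem mainTheorem9 (m b : nat) (d : 'I_m -> 'I_b.+1) (D : 'M[rat]_m) :
  (forall i j : 'I_m, D i j \in [:: 0; 1; -1]) ->
  connection_matrix d D ->
  totally_unimodular D ->
  forall i j : 'I_m, (i, j) \in isa_primary D ->
    isa_final D i j = 1 \/ isa_final D i j = -1.
Proof.
(* The hypothesis on the entries is the 1 x 1 case of total unimodularity. *)
move=> _ D_conn D_tu i j.
case: m d D D_conn D_tu i j => [|m] d D D_conn D_tu i j; first by case: i.
have [S [S' [S_ut S'_ut DE]]] := isa_state_equiv D_conn m.
exact: pivot_pm1 S_ut S'_ut DE (isa_state_pivot_form D_conn m) D_tu i j.
Qed.
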